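(* For all commands $c_1,c_1',c_2$ and stores $\sigma,\sigma'$ of the While-language: if $(c_1,\sigma)\to^*(c_1',\sigma')$ and $(c_1;c_2,\sigma)\to^\infty$, then $(c_1';c_2,\sigma')\to^\infty$.
   Context: While-language syntax: variables $x$ range over a countably infinite set $\mathit{Var}$; $n$ ranges over natural numbers; values are $v ::= \mathsf{null}\mid n$ ($\mathsf{null}$ distinct from every natural number); expressions are $e ::= v\mid x\mid e_1\oplus e_2$ with $\oplus\in\{+,-,*\}$, where $\oplus(n_1,n_2)$ is the result of the operation on naturals; commands are $c ::= \mathsf{skip}\mid\mathsf{alloc}\ x\mid x:=e\mid c_1;c_2\mid \mathsf{if}\ e\ c_1\ c_2\mid\mathsf{while}\ e\ c$. A store $\sigma$ is a finite partial map from $\mathit{Var}$ to values, with domain $\mathrm{dom}(\sigma)$, lookup $\sigma(x)$, update $\sigma[x\mapsto v]$. Expression evaluation $(e,\sigma)\Rightarrow_E v$ is the least relation with: $(v,\sigma)\Rightarrow_E v$; $(x,\sigma)\Rightarrow_E\sigma(x)$ if $x\in\mathrm{dom}(\sigma)$; if $(e_1,\sigma)\Rightarrow_E n_1$ and $(e_2,\sigma)\Rightarrow_E n_2$ with $n_1,n_2$ naturals then $(e_1\oplus e_2,\sigma)\Rightarrow_E\oplus(n_1,n_2)$. Small-step relation $(c,\sigma)\to(c',\sigma')$ is the least relation with: $(\mathsf{alloc}\ x,\sigma)\to(\mathsf{skip},\sigma[x\mapsto\mathsf{null}])$ if $x\notin\mathrm{dom}(\sigma)$; $(x:=e,\sigma)\to(\mathsf{skip},\sigma[x\mapsto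 v])$ if $x\in\mathrm{dom}(\sigma)$ and $(e,\sigma)\Rightarrow_E v$; $(c_1;c_2,\sigma)\to(c_1';c_2,\sigma')$ if $(c_1,\sigma)\to(c_1',\sigma')$; $(\mathsf{skip};c_2,\sigma)\to(c_2,\sigma)$; $(\mathsf{if}\ e\ c_1\ c_2,\sigma)\to(c_1,\sigma)$ if $(e,\sigma)\Rightarrow_E v$, $v\neq 0$; $(\mathsf{if}\ e\ c_1\ c_2,\sigma)\to(c_2,\sigma)$ if $(e,\sigma)\Rightarrow_E 0$; $(\mathsf{while}\ e\ c,\sigma)\to(c;\mathsf{while}\ e\ c,\sigma)$ if $(e,\sigma)\Rightarrow_E v$, $v\neq0$; $(\mathsf{while}\ e\ c,\sigma)\to(\mathsf{skip},\sigma)$ if $(e,\sigma)\Rightarrow_E 0$. $\to^*$ is its reflexive-transitive closure. The predicate $(c,\sigma)\to^\infty$ is coinductively defined (greatest predicate) by: if $(c,\sigma)\to(c',\sigma')$ and $(c',\sigma')\to^\infty$ then $(c,\sigma)\to^\infty$; i.e. it holds exactly when there is an infinite sequence of transitions from $(c,\sigma)$. *)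

From Stdlib Require Import List Arith.
Import ListNotations.

Definition var := nat.

Inductive value : Type := VNull | VNat (n : nat).

Inductive binop : Type := OPlus | OMinus | OMult.

Inductive expr : Type :=
| EVal (v : value)
| EVar (x : var)
| EOp (op : binop) (e1 e2 : expr).

Inductive cmd : Type :=
| Skip
| Alloc (x : var)
| Assign (x : var) (e : expr)
| Seq (c1 c2 : cmd)
| If (e : expr) (c1 c2 : cmd)
| While (e : expr) (c : cmd).

Definition finite_dom (s : var -> option value) : Prop :=
  exists l : list var, forall x, s x <> None -> In x l.

Definition store := { s : var -> option value | finite_dom s }.

Definition lookup (st : store) (x : var) : option value := proj1_sig st x.

Definition upd_fun (s : var -> option value) (x : var) (v : value) :=
  fun y => if Nat.eqb y x then Some v else s y.

Lemma upd_finite (s : var -> option value) (x : var) (v : value) :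
  finite_dom s -> finite_dom (upd_fun s x v).
Proof.
  intros [l Hl]. exists (x :: l). intros y Hy. unfold upd_fun in Hy.
  destruct (Nat.eqb y x) eqn:E.
  - apply Nat.eqb_eq in E. subst. left. reflexivity.
  - right. apply Hl. exact Hy.
Qed.

Definition update (st : store) (x : var) (v : value) : store :=
  exist _ (upd_fun (proj1_sig st) x v) (upd_finite _ x v (proj2_sig st)).

Definition in_dom (st : store) (x : var) : Prop := lookup st x <> None.

(* Truncated subtraction on naturals, as "the result of the operation on naturals". *)
Definition op_sem (op : binop) (n1 n2 : nat) : nat :=
  match op with OPlus => n1 + n2 | OMinus => n1 - n2 | OMult => n1 * n2 end.

Inductive eval : expr -> store -> value -> Prop :=
| eval_val : forall v st, eval (EVal v) st v
| eval_var : forall x st v, lookup st x = Some v -> eval (EVar x) st v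
| eval_op : forall op e1 e2 st n1 n2,
    eval e1 st (VNat n1) -> eval e2 st (VNat n2) ->
    eval (EOp op e1 e2) st (VNat (op_sem op n1 n2)).

Inductive step : cmd * store -> cmd * store -> Prop :=
| step_alloc : forall x st, ~ in_dom st x ->
    step (Alloc x, st) (Skip, update st x VNull)
| step_assign : forall x e st v, in_dom st x -> eval e st v ->
    step (Assign x e, st) (Skip, update st x v)
| step_seq : forall c1 c1' c2 st st', step (c1, st) (c1', st') ->
    step (Seq c1 c2, st) (Seq c1' c2, st')
| step_seq_skip : forall c2 st, step (Seq Skip c2, st) (c2, st)
| step_if_true : forall e c1 c2 st v, eval e st v -> v <> VNat 0 ->
    step (If e c1 c2, st) (c1, st)
| step_if_false : forall e c1 c2 st, eval e st (VNat 0) ->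
    step (If e c1 c2, st) (c2, st)
| step_while_true : forall e c st v, eval e st v -> v <> VNat 0 ->
    step (While e c, st) (Seq c (While e c), st)
| step_while_false : forall e c st, eval e st (VNat 0) ->
    step (While e c, st) (Skip, st).

Inductive steps : cmd * store -> cmd * store -> Prop :=
| steps_refl : forall cs, steps cs cs
| steps_trans : forall cs1 cs2 cs3, step cs1 cs2 -> steps cs2 cs3 -> steps cs1 cs3.

CoInductive diverges : cmd * store -> Prop :=
| diverges_step : forall cs cs', step cs cs' -> diverges cs' -> diverges cs.

(** The semantics is deterministic, so the unique infinite run of [c1; c2] from [s]
    must pass through every configuration [(c1'; c2, s')] that the lifted finite
    run of [c1] reaches, and whatever follows it is an infinite run from there. *)


Lemma eval_deterministic (e : expr) (st : store) (v1 v2 : value) :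
  eval e st v1 -> eval e st v2 -> v1 = v2.
Proof.
  intros H1; revert v2.
  induction H1 as [| | op e1 e2 st n1 n2 _ IH1 _ IH2]; intros w H2;
    inversion H2; subst; try congruence.
  match goal with
  | H1 : eval e1 _ _, H2 : eval e2 _ _ |- _ =>
      apply IH1 in H1; apply IH2 in H2
  end.
  congruence.
Qed.

Lemma step_deterministic (cs cs1 cs2 : cmd * store) :
  step cs cs1 -> step cs cs2 -> cs1 = cs2.
Proof.
  intros H1; revert cs2.
  induction H1 as [| | c1 c1' c2 st st' Hstep IH | | | | |]; intros cs2 H2;
    inversion H2; subst; try reflexivity;
  repeat match goal with
  | H : eval ?e ?st ?v1, H' : eval ?e ?st ?v2 |- _ =>
      pose proof (eval_deterministic _ _ _ _ H H'); clear H'; subst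
  end;
  try congruence;
  try match goal with H : step (Skip, _) _ |- _ => inversion H end.
  match goal with H : step (c1, _) _ |- _ => apply IH in H end.
  congruence.
Qed.

Lemma diverges_step_inv (cs cs' : cmd * store) :
  step cs cs' -> diverges cs -> diverges cs'.
Proof.
  intros Hstep Hdiv; destruct Hdiv as [cs cs'' Hstep' Hdiv'].
  now rewrite (step_deterministic _ _ _ Hstep Hstep').
Qed.

Lemma diverges_steps_inv (cs cs' : cmd * store) :
  steps cs cs' -> diverges cs -> diverges cs'.
Proof.
  induction 1 as [| cs1 cs2 cs3 Hstep _ IH]; intros Hdiv.
  - exact Hdiv.
  - exact (IH (diverges_step_inv _ _ Hstep Hdiv)).
Qed.

Lemma steps_seq (c1 c1' c2 : cmd) (s s' : store) :
  steps (c1, s) (c1', s') -> steps (Seq c1 c2, s) (Seq c1' c2, s').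
Proof.
  remember (c1, s) as cs eqn:Ecs; remember (c1', s') as cs' eqn:Ecs'.
  intros H; revert c1 s Ecs.
  induction H as [cs | cs1 [cx sx] cs3 Hstep _ IH]; intros c1 s Ecs; subst.
  - injection Ecs as -> ->; constructor.
  - econstructor.
    + apply step_seq; exact Hstep.
    + now apply IH.
Qed.

Theorem lemma7 (c1 c1' c2 : cmd) (s s' : store) :
  steps (c1, s) (c1', s') ->
  diverges (Seq c1 c2, s) ->
  diverges (Seq c1' c2, s').
Proof.
  intros Hsteps.
  apply diverges_steps_inv.
  now apply steps_seq.
Qed.
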